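(* Consider the second-order Kuramoto model with bonding force $$\dot\theta_i=\omega_i,\qquad \dot\omega_i=\frac{1}{N}\sum_{j=1}^N\big[\kappa_0\cos(\theta_j-\theta_i)+\kappa_1\big](\omega_j-\omega_i)+\frac{\kappa_2}{N}\sum_{j=1}^N\big[|\theta_j-\theta_i|-\theta^\infty_{ij}\big]\operatorname{sgn}(\theta_j-\theta_i),\quad i\in[N].$$ Suppose $(\Theta^0,W^0)\in\mathcal{S}$, $\mathcal{E}(0)<\frac{\kappa_2(\min_{i\ne j}\theta^\infty_{ij})^2}{2N}$, $\kappa_0\cos\mathcal{U}+\kappa_1>0$, $\kappa_2>0$, and let $\{\theta_i\}$ be a global smooth solution. Then $$\inf_{0\le t<\infty}\min_{i\ne j}|\theta_j(t)-\theta_i(t)|\ge\mathcal{L}>0.$$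
   Context: $N\ge2$, $\kappa_0,\kappa_1\ge0$; $[\theta^\infty_{ij}]$ real symmetric with zero diagonal; $\operatorname{sgn}$ the sign function. $\mathcal{E}:=\frac12\sum_i|\omega_i|^2+\frac{\kappa_2}{4N}\sum_{i,j}(|\theta_j-\theta_i|-\theta^\infty_{ij})^2$; $\mathcal{U}:=\max_{i\ne j}\theta^\infty_{ij}+\sqrt{2N\mathcal{E}(0)/\kappa_2}$; $\mathcal{L}:=\min_{i\ne j}\theta^\infty_{ij}-\sqrt{2N\mathcal{E}(0)/\kappa_2}$; $\mathcal{S}:=\{(\Theta,W)\in\mathbb{R}^{2N}:|\theta_i-\theta_j|<\mathcal{U}<\pi\ \forall i,j\}$. *)

From HB Require Import structures.
From mathcomp Require Import all_boot all_order all_algebra.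
From mathcomp Require Import all_classical all_reals all_analysis.
Set Implicit Arguments. Unset Strict Implicit. Unset Printing Implicit Defensive.
Import Order.TTheory GRing.Theory Num.Theory.
Import numFieldNormedType.Exports.
Local Open Scope ring_scope.

Definition offdiag (R : realType) (N : nat) (th : 'I_N -> 'I_N -> R) : seq R :=
  [seq th p.1 p.2 | p <- enum [pred p : 'I_N * 'I_N | p.1 != p.2]].

(* min_{i<>j} th i j  and  max_{i<>j} th i j  (meaningful for N >= 2,
   where the list is nonempty) *)
Definition offdiag_min (R : realType) (N : nat) (th : 'I_N -> 'I_N -> R) : R :=
  foldr Num.min (head 0 (offdiag th)) (offdiag th).
Definition offdiag_max (R : realType) (N : nat) (th : 'I_N -> 'I_N -> R) : R :=
  foldr Num.max (head 0 (offdiag th)) (offdiag th).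

Definition energy (R : realType) (N : nat) (k2 : R) (thinf : 'I_N -> 'I_N -> R)
  (Th W : 'I_N -> R) : R :=
  2^-1 * \sum_(i < N) (W i) ^+ 2
  + k2 / (4 * N%:R) * \sum_(i < N) \sum_(j < N) (`|Th j - Th i| - thinf i j) ^+ 2.

Definition Ubound (R : realType) (N : nat) (k2 : R) (thinf : 'I_N -> 'I_N -> R) (E0 : R) : R :=
  offdiag_max thinf + Num.sqrt (2 * N%:R * E0 / k2).
Definition Lbound (R : realType) (N : nat) (k2 : R) (thinf : 'I_N -> 'I_N -> R) (E0 : R) : R :=
  offdiag_min thinf - Num.sqrt (2 * N%:R * E0 / k2).

Definition kuramoto_rhs (R : realType) (N : nat) (k0 k1 k2 : R)
  (thinf : 'I_N -> 'I_N -> R) (Th W : 'I_N -> R) (i : 'I_N) : R :=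
  N%:R^-1 * \sum_(j < N) (k0 * cos (Th j - Th i) + k1) * (W j - W i)
  + k2 / N%:R * \sum_(j < N) (`|Th j - Th i| - thinf i j) * Num.sg (Th j - Th i).

(* Along a solution the energy E obeys
     dE/dt = -(1/2N) sum_{i,j} (k0 cos(theta_j - theta_i) + k1) (omega_j - omega_i)^2
   as long as no two phases collide (so that |theta_j - theta_i| is differentiable);
   hence E decreases while all couplings k0 cos(theta_j - theta_i) + k1 are nonnegative.
   Conversely, a single pair term of E shows that E(t) <= E(0) confines every gap
   |theta_j - theta_i| to [L, U], and since 0 < L and U < pi the couplings are then
   positive (cos decreases on [0, pi]).  A real induction on [0, oo) closes the loop:
   the set of times up to which E <= E(0) is closed because E is continuous, and open
   to the right because near such a time the gaps stay nonzero and the couplings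
   positive, so E cannot increase.  Finally 0 < L because E(0) < k2 m^2 / (2N) with
   m = min theta^oo, and m > 0 by the pair bound at a minimizing pair. *)

From HB Require Import structures.
From mathcomp Require Import all_boot all_order all_algebra.
From mathcomp Require Import all_classical all_reals all_analysis.
From mathcomp Require Import ring lra.
Set Implicit Arguments. Unset Strict Implicit. Unset Printing Implicit Defensive.
Import Order.TTheory GRing.Theory Num.Theory.
Import numFieldNormedType.Exports.
Local Open Scope ring_scope.
Local Open Scope classical_set_scope.

Section RealFunctions.
Variable R : realType.

Lemma is_derive_continuous (f : R -> R) (t l : R) :
  is_derive t 1 f l -> {for t, continuous f}.
Proof. by move=> fl; apply/differentiable_continuous/derivable1_diffP; exact: ex_derive. Qed.

Lemma continuous_le_left (g : R -> R) (a x c : R) : a < x -> {for x, continuous g} ->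
  (forall u, a <= u -> u < x -> g u <= c) -> g x <= c.
Proof.
move=> ax gx gc; rewrite leNgt; apply/negP => cgx.
have gt_near : \forall u \near x^'-, c < g u.
  exact: cvgr_gt _ (cvg_at_left_filter gx) _ cgx.
have [u []] : exists u, c < g u /\ (a <= u /\ u < x).
  apply: (@filter_ex _ x^'-); near=> u; split; last split.
  - by near: u.
  - by near: u; exact: nbhs_left_ge.
  - by near: u; exact: nbhs_left_lt.
by rewrite ltNge => /negP + [au ux]; apply; exact: gc.
Unshelve. all: by end_near. Qed.

Lemma halfline_induction (P : R -> Prop) : P 0 ->
  (forall s, 0 < s -> (forall u, 0 <= u -> u < s -> P u) -> P s) ->
  (forall s, 0 <= s -> (forall u, 0 <= u -> u <= s -> P u) ->
     exists2 d, 0 < d & forall u, s < u -> u < s + d -> P u) ->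
  forall t, 0 <= t -> P t.
Proof.
move=> P0 closedP openP t t0; apply: contrapT => nPt.
pose B := [set s | 0 <= s /\ forall u, 0 <= u -> u <= s -> P u].
have B0 : B 0 by split=> // u u0 u0'; have -> : u = 0 by apply/eqP; rewrite eq_le u0 u0'.
have Bt : ubound B t.
  move=> s [_ Ps]; rewrite leNgt; apply/negP => ts; exact/nPt/Ps/ltW.
have supB : has_sup B by split; [exists 0 | exists t].
set m := sup B.
have m0 : 0 <= m by exact: sup_upper_bound B0.
have below u : 0 <= u -> u < m -> P u.
  by move=> u0 /(sup_gt (ex_intro _ 0 B0)) [s [_ Ps] us]; exact/Ps/ltW.
have Pm u : 0 <= u -> u <= m -> P u.
  move=> u0; rewrite le_eqVlt => /predU1P [->|]; last exact: below.
  have [m_gt0|m_le0] := ltrP 0 m; first exact: closedP.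
  by have -> : m = 0 by apply/le_anti; rewrite m_le0 m0.
have [d d0 Pd] := openP m m0 Pm.
have : B (m + d / 2).
  split=> [|u u0 ud]; first lra.
  by have [um|mu] := leP u m; [exact: Pm | apply: Pd => //; lra].
by move/(sup_upper_bound supB); rewrite -/m; lra.
Qed.

Lemma is_derive_norm (f : R -> R) (t df : R) : is_derive t 1 f df -> f t != 0 ->
  is_derive t 1 (fun s => `|f s|) (Num.sg (f t) * df).
Proof.
move=> fdf ft0; have fc := is_derive_continuous fdf.
case: ltgtP ft0 => // [ft_lt0|ft_gt0] _.
- rewrite ltr0_sg // mulN1r; apply: near_eq_is_derive (is_deriveN fdf).
  by apply: filterS (cvgr_lt _ fc _ ft_lt0) => s /ltr0_norm.
- rewrite gtr0_sg // mul1r; apply: near_eq_is_derive fdf.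
  by apply: filterS (cvgr_gt _ fc _ ft_gt0) => s /gtr0_norm.
Qed.

Lemma is_derive_sqr (f : R -> R) (t df : R) : is_derive t 1 f df ->
  is_derive t 1 (fun s => f s ^+ 2) (2 * f t * df).
Proof.
move=> fdf; have := is_deriveX 2 fdf; rewrite expr1 mulr_natl.
by congr is_derive; apply/funext => s; rewrite /= !expr2.
Qed.
End RealFunctions.

Section FoldMinMax.
Variable R : realDomainType.

Lemma foldr_min_le (s : seq R) h x : x \in s -> foldr Num.min h s <= x.
Proof.
elim: s => // y s IHs; rewrite inE => /predU1P [->|xs] /=; rewrite ge_min ?lexx //.
by rewrite IHs ?orbT.
Qed.

Lemma foldr_max_ge (s : seq R) h x : x \in s -> x <= foldr Num.max h s.
Proof.
elim: s => // y s IHs; rewrite inE => /predU1P [->|xs] /=; rewrite le_max ?lexx //.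
by rewrite IHs ?orbT.
Qed.

Lemma foldr_min_mem (s : seq R) h : foldr Num.min h s \in h :: s.
Proof.
elim: s => [|y s IHs] /=; first exact: mem_head.
rewrite /Num.min; case: ifP => _; first by rewrite !inE eqxx orbT.
by move: IHs; rewrite !inE => /orP [->|->]; rewrite ?orbT.
Qed.
End FoldMinMax.

Section Offdiag.
Variables (R : realType) (N : nat) (th : 'I_N -> 'I_N -> R).

Lemma mem_offdiag i j : i != j -> th i j \in offdiag th.
Proof. by move=> ij; apply/mapP; exists (i, j); rewrite ?mem_enum. Qed.

Lemma offdiag_min_le i j : i != j -> offdiag_min th <= th i j.
Proof. by move=> ij; apply/foldr_min_le/mem_offdiag. Qed.

Lemma offdiag_max_ge i j : i != j -> th i j <= offdiag_max th.
Proof. by move=> ij; apply/foldr_max_ge/mem_offdiag. Qed.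

Lemma offdiag_minP : (1 < N)%N ->
  exists i j, i != j /\ offdiag_min th = th i j.
Proof.
move=> N_gt1.
have /mem_offdiag : Ordinal (ltnW N_gt1) != Ordinal N_gt1 by [].
case E : (offdiag th) => [//|x s] _.
have : offdiag_min th \in offdiag th.
  by move: (foldr_min_mem (offdiag th) x); rewrite /offdiag_min E /= !inE orbA orbb.
by case/mapP => -[i j]; rewrite mem_enum => ij ->; exists i, j.
Qed.
End Offdiag.

Section DoubleSums.
Variables (R : comPzRingType) (n : nat).
Implicit Types (c d : 'I_n -> 'I_n -> R) (w : 'I_n -> R).

Lemma sum_sym_mul_diff c w : (forall i j, c j i = c i j) ->
  2 * \sum_i \sum_j w i * (c i j * (w j - w i)) = - \sum_i \sum_j c i j * (w j - w i) ^+ 2.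
Proof.
move=> c_sym; rewrite mulr2n mulrDl mul1r {2}exchange_big /= -big_split -sumrN /=.
apply: eq_bigr => i _; rewrite -big_split -sumrN /=; apply: eq_bigr => j _.
rewrite [c j i]c_sym; ring.
Qed.

Lemma sum_antisym_mul_diff d w : (forall i j, d j i = - d i j) ->
  \sum_i \sum_j d i j * (w j - w i) = - 2 * \sum_i \sum_j d i j * w i.
Proof.
move=> d_anti; have swap : \sum_i \sum_j d i j * w j = - \sum_i \sum_j d i j * w i.
  rewrite exchange_big /= -sumrN; apply: eq_bigr => i _.
  by rewrite -sumrN; apply: eq_bigr => j _; rewrite d_anti mulNr.
transitivity (\sum_i \sum_j d i j * w j - \sum_i \sum_j d i j * w i).
  by rewrite -sumrB; apply: eq_bigr => i _; rewrite -sumrB; apply: eq_bigr => j _; ring.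
by rewrite swap; ring.
Qed.
End DoubleSums.

Section EnergyLandscape.
Variables (R : realType) (N : nat) (k0 k1 k2 : R) (thinf : 'I_N -> 'I_N -> R).
Hypothesis thinf_sym : forall i j, thinf i j = thinf j i.
Implicit Types (Th W : 'I_N -> R).

Definition coupling Th i j := k0 * cos (Th j - Th i) + k1.

Definition dissipation Th W :=
  - (2 * N%:R)^-1 * \sum_i \sum_j coupling Th i j * (W j - W i) ^+ 2.

Lemma energy_ge_pair Th W i j : 0 <= k2 -> i != j ->
  k2 / (2 * N%:R) * (`|Th j - Th i| - thinf i j) ^+ 2 <= energy k2 thinf Th W.
Proof.
move=> k2_ge0 ij; have N_gt0 : (0 < N)%N by apply: leq_ltn_trans (ltn_ord i).
set f := fun i j => (`|Th j - Th i| - thinf i j) ^+ 2.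
have f_ge0 i' j' : 0 <= f i' j' by exact: sqr_ge0.
have fji : f j i = f i j by rewrite /f distrC thinf_sym.
have row_ge k l : f k l <= \sum_j' f k j'.
  by rewrite (bigD1 l) //= lerDl sumr_ge0.
have pair_le_sum : f i j + f j i <= \sum_i' \sum_j' f i' j'.
  rewrite (bigD1 i) // (bigD1 j) 1?eq_sym //= addrA.
  by rewrite ler_wpDr ?sumr_ge0 ?lerD // => k _; apply: sumr_ge0.
rewrite /energy -[X in X <= _]add0r; apply: lerD.
  by rewrite mulr_ge0 ?invr_ge0 // sumr_ge0 // => k _; exact: sqr_ge0.
apply: le_trans (ler_wpM2l _ pair_le_sum); last by rewrite mulr_ge0 ?invr_ge0.
have -> : k2 / (4 * N%:R) * (f i j + f j i) = k2 / (2 * N%:R) * f i j.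
  by rewrite fji /f; field; rewrite pnatr_eq0 -lt0n.
exact: lexx.
Qed.

Lemma energy_dist_bounds Th W E i j : 0 < k2 -> i != j -> energy k2 thinf Th W <= E ->
  Lbound k2 thinf E <= `|Th j - Th i| <= Ubound k2 thinf E.
Proof.
move=> k2_gt0 ij EE; have N_gt0 : 0 < N%:R :> R.
  by rewrite ltr0n; apply: leq_ltn_trans (ltn_ord i).
have dev_le : `| `|Th j - Th i| - thinf i j| <= Num.sqrt (2 * N%:R * E / k2).
  have pair_le := le_trans (energy_ge_pair Th W (ltW k2_gt0) ij) EE.
  rewrite -[X in X <= _]sqrtr_sqr; apply: ler_wsqrtr; rewrite ler_pdivlMr //.
  apply: le_trans (ler_wpM2l _ pair_le); last by rewrite mulr_ge0 // ltW.
  have -> : 2 * N%:R * (k2 / (2 * N%:R) * (`|Th j - Th i| - thinf i j) ^+ 2)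
          = (`|Th j - Th i| - thinf i j) ^+ 2 * k2 by field; rewrite lt0r_neq0.
  exact: lexx.
move: dev_le (offdiag_min_le thinf ij) (offdiag_max_ge thinf ij).
by rewrite ler_norml /Lbound /Ubound => /andP [? ?] ? ?; apply/andP; split; lra.
Qed.

Lemma Lbound_gt0 Th W : (1 < N)%N -> 0 < k2 ->
  energy k2 thinf Th W < k2 * offdiag_min thinf ^+ 2 / (2 * N%:R) ->
  0 < Lbound k2 thinf (energy k2 thinf Th W).
Proof.
move=> N_gt1 k2_gt0; set E := energy _ _ _ _; set m := offdiag_min thinf => E_small.
have N_gt0 : 0 < N%:R :> R by rewrite ltr0n ltnW.
have c_gt0 : 0 < k2 / (2 * N%:R) by rewrite divr_gt0 ?mulr_gt0.
have m_gt0 : 0 < m.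
  have [i [j [ij m_eq]]] := offdiag_minP thinf N_gt1.
  rewrite ltNge; apply/negP => m_le0.
  have pair_le := energy_ge_pair Th W (ltW k2_gt0) ij.
  rewrite -/E -m_eq -/m in pair_le.
  have sq_le : m ^+ 2 <= (`|Th j - Th i| - m) ^+ 2.
    by have := normr_ge0 (Th j - Th i); rewrite !expr2; nra.
  have := le_lt_trans (le_trans (ler_wpM2l (ltW c_gt0) sq_le) pair_le) E_small.
  by rewrite mulrAC ltxx.
rewrite /Lbound -/m subr_gt0 -(gtr0_norm m_gt0) -sqrtr_sqr ltr_sqrt ?exprn_gt0 //.
move: E_small; rewrite ltr_pdivlMr ?mulr_gt0 // ltr_pdivrMr //; lra.
Qed.

Lemma coupling_gt0 U Th i j : 0 <= k0 -> U < pi -> 0 < k0 * cos U + k1 ->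
  `|Th j - Th i| <= U -> 0 < coupling Th i j.
Proof.
move=> k0_ge0 U_lt_pi cU_gt0 dU; apply: lt_le_trans cU_gt0 _.
have U_ge0 : 0 <= U := le_trans (normr_ge0 _) dU.
have dpi : `|Th j - Th i| <= pi by rewrite (le_trans dU) ?ltW.
rewrite lerD2r ler_wpM2l // -[cos (_ - _)]cos_norm leNgt.
by rewrite ltr_cos ?in_itv /= ?U_ge0 ?normr_ge0 ?dpi ?ltW // -leNgt.
Qed.

Lemma dissipation_le0 Th W : (forall i j, i != j -> 0 <= coupling Th i j) ->
  dissipation Th W <= 0.
Proof.
move=> c_ge0; rewrite /dissipation mulNr oppr_le0 mulr_ge0 ?invr_ge0 ?mulr_ge0 //.
apply: sumr_ge0 => i _; apply: sumr_ge0 => j _.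
have [->|ij] := eqVneq i j; first by rewrite subrr expr0n mulr0.
by rewrite mulr_ge0 ?c_ge0 ?sqr_ge0.
Qed.

(* The left-hand side is dE/dt along the flow, as produced by the chain rule. *)
Lemma energy_rate_eq Th W : (0 < N)%N ->
  2^-1 * \sum_i 2 * W i * kuramoto_rhs k0 k1 k2 thinf Th W i
  + k2 / (4 * N%:R) * \sum_i \sum_j
      2 * (`|Th j - Th i| - thinf i j) * (Num.sg (Th j - Th i) * (W j - W i))
  = dissipation Th W.
Proof.
move=> N_gt0; have N_neq0 : N%:R != 0 :> R by rewrite pnatr_eq0 -lt0n.
pose d i j := (`|Th j - Th i| - thinf i j) * Num.sg (Th j - Th i).
have d_anti i j : d j i = - d i j.
  by rewrite /d distrC thinf_sym -(opprB (Th j)) sgrN mulrN.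
have c_sym i j : coupling Th j i = coupling Th i j.
  by rewrite /coupling -(opprB (Th j)) cosN.
have -> : 2^-1 * \sum_i 2 * W i * kuramoto_rhs k0 k1 k2 thinf Th W i
    = N%:R^-1 * \sum_i \sum_j W i * (coupling Th i j * (W j - W i))
      + k2 / N%:R * \sum_i \sum_j d i j * W i.
  rewrite !mulr_sumr -big_split; apply: eq_bigr => i _ /=.
  by rewrite -mulr_sumr -mulr_suml /kuramoto_rhs /coupling /d; field.
have -> : k2 / (4 * N%:R) * \sum_i \sum_j
      2 * (`|Th j - Th i| - thinf i j) * (Num.sg (Th j - Th i) * (W j - W i))
    = k2 / (2 * N%:R) * \sum_i \sum_j d i j * (W j - W i).
  rewrite [in RHS]mulr_sumr [in LHS]mulr_sumr; apply: eq_bigr => i _.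
  rewrite [in RHS]mulr_sumr [in LHS]mulr_sumr; apply: eq_bigr => j _.
  by rewrite /d; field.
rewrite sum_antisym_mul_diff // /dissipation -[\sum_i \sum_j _ * _ ^+ 2]opprK.
by rewrite -sum_sym_mul_diff //; field.
Qed.
End EnergyLandscape.

Section Trajectory.
Variables (R : realType) (N : nat) (k0 k1 k2 : R) (thinf : 'I_N -> 'I_N -> R).
Variables theta omega : R -> 'I_N -> R.
Hypothesis thinf_sym : forall i j, thinf i j = thinf j i.
Hypothesis solution : forall t : R, 0 <= t -> forall i,
  is_derive t 1 (fun s => theta s i) (omega t i) /\
  is_derive t 1 (fun s => omega s i) (kuramoto_rhs k0 k1 k2 thinf (theta t) (omega t) i).

Implicit Types s t u : R.

Let En t := energy k2 thinf (theta t) (omega t).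

Lemma is_derive_gap t i j : 0 <= t ->
  is_derive t 1 (fun s => theta s j - theta s i) (omega t j - omega t i).
Proof. by move=> t0; apply: is_deriveB; [exact: (solution t0 j).1 | exact: (solution t0 i).1]. Qed.

Lemma energy_continuous t : 0 <= t -> {for t, continuous En}.
Proof.
move=> t0; apply: cvgD; apply: cvgM; try exact: cvg_cst.
all: apply: (cvg_big add_continuous) => // i _.
  by rewrite expr2; apply: cvgM; exact: is_derive_continuous (solution t0 i).2.
apply: (cvg_big add_continuous) => // j _; rewrite expr2.
apply: cvgM; apply: cvgB (cvg_cst _); apply: cvg_norm;
  exact: is_derive_continuous (is_derive_gap _ _ t0).
Qed.

Lemma is_derive_energy t : (0 < N)%N -> 0 <= t ->
  (forall i j, i != j -> theta t j != theta t i) ->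
  is_derive t 1 En (dissipation k0 k1 (theta t) (omega t)).
Proof.
move=> N_gt0 t0 gap_neq0; rewrite -(energy_rate_eq k0 k1 k2 thinf_sym) //.
apply: is_deriveD; apply: is_deriveZ.
  rewrite -fct_sumE; apply: is_derive_sum => i.
  exact: is_derive_sqr (solution t0 i).2.
rewrite -fct_sumE; apply: is_derive_sum => i; rewrite -fct_sumE; apply: is_derive_sum => j.
apply: is_derive_sqr; rewrite -[X in is_derive _ _ _ X]subr0; apply: is_deriveB.
have [<-|ij] := eqVneq i j.
  by rewrite subrr sgr0 mul0r; under eq_fun do rewrite subrr normr0; exact: is_derive_cst.
by apply: is_derive_norm; [exact: is_derive_gap | rewrite subr_eq0 gap_neq0].
Qed.

Section Confinement.
Variable U : R.
Hypotheses (k0_ge0 : 0 <= k0) (U_lt_pi : U < pi).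
Hypothesis coupling_U : 0 < k0 * cos U + k1.

Lemma separated_near s : 0 <= s ->
  (forall i j, i != j -> 0 < `|theta s j - theta s i| <= U) ->
  \forall u \near s, forall i j, i != j ->
    theta u j != theta u i /\ 0 < coupling k0 k1 (theta u) i j.
Proof.
move=> s0 sep.
pose P (p : 'I_N * 'I_N) u :=
  p.1 != p.2 -> theta u p.2 != theta u p.1 /\ 0 < coupling k0 k1 (theta u) p.1 p.2.
suff near_all : \forall u \near s, forall p, P p u.
  by apply: (filterS _ near_all) => u sep_u i j; exact: sep_u (i, j).
apply: (@filter_forall R _ P (nbhs s)) => -[i j]; rewrite /P /=.
have [->|ij] := eqVneq i j; first by apply: nearW => u; rewrite eqxx.
have /andP [gap_gt0 gap_le] := sep i j ij.
have gap_cont := is_derive_continuous (is_derive_gap i j s0).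
have c_cont : {for s, continuous (fun u => coupling k0 k1 (theta u) i j)}.
  apply: cvgD (cvg_cst _); apply: cvgM (cvg_cst _) _.
  exact: continuous_comp gap_cont (@continuous_cos R _).
have c_near : \forall u \near s, 0 < coupling k0 k1 (theta u) i j.
  exact: cvgr_gt _ c_cont _ (coupling_gt0 k0_ge0 U_lt_pi coupling_U gap_le).
have gap_near : \forall u \near s, 0 < `|theta u j - theta u i|.
  exact: cvgr_gt _ (cvg_norm gap_cont) _ gap_gt0.
apply: filterS2 c_near gap_near => u c_gt0 gap_u _; split=> //.
by rewrite -subr_eq0 -normr_gt0.
Qed.
End Confinement.

Section EnergyDecay.
Hypotheses (N_gt0 : (0 < N)%N) (k0_ge0 : 0 <= k0) (k2_gt0 : 0 < k2).
Let E0 := En 0.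
Let U := Ubound k2 thinf E0.
Hypotheses (L_gt0 : 0 < Lbound k2 thinf E0) (U_lt_pi : U < pi).
Hypothesis coupling_U : 0 < k0 * cos U + k1.

Lemma energy_le_initial t : 0 <= t -> En t <= E0.
Proof.
move: t; apply: (@halfline_induction _ (fun t => En t <= E0))
  => [|s s_gt0 E_below|s s0 E_upto].
- exact: lexx.
- exact: continuous_le_left s_gt0 (energy_continuous (ltW s_gt0)) E_below.
have sep i j : i != j -> 0 < `|theta s j - theta s i| <= U.
  move=> ij; have E_le := E_upto s s0 (lexx s).
  have /andP [L_le ->] := energy_dist_bounds thinf_sym k2_gt0 ij E_le.
  by rewrite andbT (lt_le_trans L_gt0).
have /nbhs_ballP [d d_gt0 near_s] := separated_near k0_ge0 U_lt_pi coupling_U s0 sep.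
exists d => // u su usd.
have sep_near x : s <= x -> x <= u -> forall i j, i != j ->
    theta x j != theta x i /\ 0 < coupling k0 k1 (theta x) i j.
  move=> sx xu; apply: near_s; rewrite /ball /= distrC ger0_norm ?subr_ge0 //; lra.
have En_deriv x : x \in `]s, u[%R -> is_derive x 1 En (dissipation k0 k1 (theta x) (omega x)).
  rewrite in_itv /= => /andP [sx xu].
  apply: is_derive_energy; rewrite ?(le_trans s0 (ltW sx)) // => i j ij.
  exact: (sep_near x (ltW sx) (ltW xu) i j ij).1.
have En_cont : {within `[s, u], continuous En}.
  apply: continuous_in_subspaceT => x; rewrite inE /= in_itv /= => /andP [sx _].
  exact: energy_continuous (le_trans s0 sx).
have [c] := MVT_segment (ltW su) En_deriv En_cont.
rewrite in_itv /= => /andP [sc cu] E_mvt.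
have : dissipation k0 k1 (theta c) (omega c) * (u - s) <= 0.
  rewrite mulr_le0_ge0 ?subr_ge0 ?(ltW su) // dissipation_le0 // => i j ij.
  exact: ltW (sep_near c sc cu i j ij).2.
have := E_upto s s0 (lexx s); lra.
Qed.
End EnergyDecay.
End Trajectory.

Local Close Scope classical_set_scope.
Unset Implicit Arguments.

Theorem corollary3p1 (R : realType) (N : nat) (k0 k1 k2 : R)
  (thinf : 'I_N -> 'I_N -> R) (theta omega : R -> 'I_N -> R) :
  (2 <= N)%N -> 0 <= k0 -> 0 <= k1 -> 0 < k2 ->
  (forall i j, thinf i j = thinf j i) -> (forall i, thinf i i = 0) ->
  (* global (differentiable) solution on [0, oo) *)
  (forall t : R, 0 <= t -> forall i : 'I_N,
     is_derive t (1 : R) (fun s : R => theta s i) (omega t i) /\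
     is_derive t (1 : R) (fun s : R => omega s i)
       (kuramoto_rhs k0 k1 k2 thinf (theta t) (omega t) i)) ->
  let E0 := energy k2 thinf (theta 0) (omega 0) in
  let U := Ubound k2 thinf E0 in
  let L := Lbound k2 thinf E0 in
  (* (Theta^0, W^0) in S *)
  (forall i j, `|theta 0 i - theta 0 j| < U) -> U < pi ->
  E0 < k2 * (offdiag_min thinf) ^+ 2 / (2 * N%:R) ->
  0 < k0 * cos U + k1 ->
  (forall t : R, 0 <= t -> forall i j : 'I_N, i != j -> L <= `|theta t j - theta t i|) /\ 0 < L.
Proof.
move=> N_gt1 k0_ge0 _ k2_gt0 thinf_sym _ solution E0 U L _ U_lt_pi E0_small coupling_U.
have L_gt0 : 0 < L := Lbound_gt0 thinf_sym N_gt1 k2_gt0 E0_small.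
split=> // t t0 i j ij.
have E_le := energy_le_initial thinf_sym solution (ltnW N_gt1) k0_ge0 k2_gt0
  L_gt0 U_lt_pi coupling_U t0.
by have /andP [] := energy_dist_bounds thinf_sym k2_gt0 ij E_le.
Qed.
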